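(* The proof system $\mathbf{DFD}$ is sound with respect to general relational models (every $\mathbf{DFD}$-provable formula is true at every state of every general relational model), and the proof system $\mathbf{DFD}^{\neq\emptyset}$ is sound with respect to general relational models of $\mathsf{DFD}^{\neq\emptyset}$.
   Context: Vocabulary: finite set $V$ of basic variables and predicate symbols with arities. Terms: $v\in V$, and $\bigcirc x$ for a term $x$. Formulas of $\mathcal{L}$: $P(x_1,\dots,x_k)$, $\neg\varphi$, $\varphi\wedge\psi$, $\bigcirc\varphi$, $\mathsf{D}_X\varphi$, $D_Xy$ ($X$ a finite, possibly empty, set of terms). $\mathcal{L}^{\neq\emptyset}$: sublanguage where all subscripts $X$ are non-empty. Abbreviations: $\bigcirc X=\{\bigcirc x:x\in X\}$, $D_XY:=\bigwedge_{y\in Y}D_Xy$ for finite $Y$, $\widehat{\mathsf{D}}_X=\neg\mathsf{D}_X\neg$. Proof system $\mathbf{DFD}$: all propositional tautologies and modus ponens; $\bigcirc(\varphi\to\psi)\to(\bigcirc\varphi\to\bigcirc\psi)$; $\bigcirc\neg\varphi\leftrightarrow\neg\bigcirc\varphi$; $\mathsf{D}_X(\varphi\to\psi)\to(\mathsf{D}_X\varphi\to\mathsf{D}_X\psi)$; $P(x_1,\dots,x_n)\to\mathsf{D}_{\{x_1,\dots,x_n\}}P(x_1,\dots,x_n)$; $D_Xy\to\mathsf{D}_XD_Xy$; $\mathsf{D}_X\varphi\to\varphi$; $\mathsf{D}_X\varphi\to\mathsf{D}_X\mathsf{D}_X\varphi$; $\neg\mathsf{D}_X\varphi\to\mathsf{D}_X\neg\mathsf{D}_X\varphi$;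 rule: from $\varphi$ infer $\mathsf{D}_X\varphi$; $D_Xx$ for $x\in X$; $D_XY\wedge D_YZ\to D_XZ$; $D_V\bigcirc v$ for $v\in V$; $D_XY\wedge\mathsf{D}_Y\varphi\to\mathsf{D}_X\varphi$; $\mathsf{D}_\emptyset\varphi\to\bigcirc\varphi$; $\bigcirc P(x_1,\dots,x_k)\leftrightarrow P(\bigcirc x_1,\dots,\bigcirc x_k)$; $\bigcirc\mathsf{D}_X\varphi\to\mathsf{D}_{\bigcirc X}\bigcirc\varphi$; $\bigcirc D_Xy\to D_{\bigcirc X}\bigcirc y$. $\mathbf{DFD}^{\neq\emptyset}$: the restriction of all axioms and rules of $\mathbf{DFD}$ to formulas of $\mathcal{L}^{\neq\emptyset}$, plus the rule: from $\varphi$ infer $\bigcirc\varphi$. A general relational model is $(W,g,=_X,\|\cdot\|)_X$: $W$ non-empty; $g:W\to W$; for each finite set $X$ of terms a binary relation $=_X$ on $W$; $\|\cdot\|$ maps atoms $P(x_1,\dots,x_n)$ and $D_Xy$ to subsets of $W$ (write $s\vDash\alpha$ for $s\in\|\alpha\|$, and $s\vDash D_XY$ iff $s\vDash D_Xy$ for all $y\in Y$), satisfying: (C1) $=_\emptyset$ is universal; (C2) each $=_X$ is an equivalence relation; (C3) $s\vDash D_Xx$ for $x\in X$; if $s\vDash D_XY$ and $s\vDash D_YZ$ then $s\vDash D_XZ$; $s\vDash D_V\bigcirc x$ for all terms $x$; (C4) if $s=_Xw$ and $s\vDash D_XY$ then $w\vDash D_XY$ and $s=_Yw$; (C5) if $s=_Xw$,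 $s\vDash P(x_1,\dots,x_n)$ with $x_i\in X$, then $w\vDash P(x_1,\dots,x_n)$; (C6) $s\vDash P(\bigcirc x_1,\dots,\bigcirc x_n)$ iff $g(s)\vDash P(x_1,\dots,x_n)$; (C7) if $s=_{\bigcirc X}w$ then $g(s)=_Xg(w)$; (C8) if $g(s)\vDash D_XY$ then $s\vDash D_{\bigcirc X}\bigcirc Y$. Truth: atoms via $\|\cdot\|$; Boolean as usual; $s\vDash\bigcirc\varphi$ iff $g(s)\vDash\varphi$; $s\vDash\mathsf{D}_X\varphi$ iff all $t$ with $s=_Xt$ satisfy $\varphi$. A general relational model of $\mathsf{DFD}^{\neq\emptyset}$ is the same but with relations $=_X$ and atoms $D_Xy$ only for non-empty $X$, condition C1 dropped, and C2–C8 required for non-empty sets only; it interprets $\mathcal{L}^{\neq\emptyset}$. *)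

From mathcomp Require Import all_boot.
From mathcomp Require Import finmap.

Set Implicit Arguments.
Unset Strict Implicit.
Unset Printing Implicit Defensive.

Local Open Scope fset_scope.

Section DFDLogic.

Variables (Var Pred : finType) (ar : Pred -> nat).

(* Terms: v and (next x).  The term  next^n v  is encoded as the pair (n, v). *)
Definition term : Type := (nat * Var)%type.
Definition tvar (v : Var) : term := (0, v).
Definition tnext (x : term) : term := (x.1.+1, x.2).

Definition Vset : {fset term} := [fset tvar v | v in enum Var].
Definition nextset (X : {fset term}) : {fset term} := [fset tnext x | x in X].

(* Formulas.  FTop is the truth constant (used only as the empty conjunction,
   needed for D_X Y with Y empty). *)
Inductive form : Type :=
| FTop
| FPred (P : Pred) (xs : (ar P).-tuple term)
| FNeg (f : form)
| FAnd (f g : form)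
| FNext (f : form)
| FBox (X : {fset term}) (f : form)
| FDep (X : {fset term}) (y : term).

Definition fimp (f g : form) : form := FNeg (FAnd f (FNeg g)).
Definition fiff (f g : form) : form := FAnd (fimp f g) (fimp g f).
Definition bigand (fs : seq form) : form := foldr FAnd FTop fs.
Definition fDeps (X Y : {fset term}) : form := bigand [seq FDep X y | y <- Y].

Fixpoint ne (f : form) : bool :=
  match f with
  | FTop | FPred _ _ => true
  | FNeg f | FNext f => ne f
  | FAnd f g => ne f && ne g
  | FBox X f => (X != fset0) && ne f
  | FDep X _ => X != fset0
  end.

(* Propositional tautologies: true under every Boolean valuation of the
   non-Boolean subformulas. *)
Fixpoint beval (val : form -> bool) (f : form) : bool :=
  match f with
  | FTop => true
  | FNeg f => ~~ beval val f
  | FAnd f g => beval val f && beval val g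
  | _ => val f
  end.
Definition taut (f : form) : Prop := forall val, beval val f.

Inductive axiom : form -> Prop :=
| ax_taut f : taut f -> axiom f
| ax_Knext f g :
    axiom (fimp (FNext (fimp f g)) (fimp (FNext f) (FNext g)))
| ax_nextneg f : axiom (fiff (FNext (FNeg f)) (FNeg (FNext f)))
| ax_KD X f g :
    axiom (fimp (FBox X (fimp f g)) (fimp (FBox X f) (FBox X g)))
| ax_predD P (xs : (ar P).-tuple term) :
    axiom (fimp (FPred xs) (FBox [fset x | x in val xs] (FPred xs)))
| ax_depD X y : axiom (fimp (FDep X y) (FBox X (FDep X y)))
| ax_T X f : axiom (fimp (FBox X f) f)
| ax_4 X f : axiom (fimp (FBox X f) (FBox X (FBox X f)))
| ax_5 X f : axiom (fimp (FNeg (FBox X f)) (FBox X (FNeg (FBox X f))))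
| ax_refl X x : x \in X -> axiom (FDep X x)
| ax_trans X Y Z : axiom (fimp (FAnd (fDeps X Y) (fDeps Y Z)) (fDeps X Z))
| ax_Vnext v : axiom (FDep Vset (tnext (tvar v)))
| ax_transfer X Y f : axiom (fimp (FAnd (fDeps X Y) (FBox Y f)) (FBox X f))
| ax_empty f : axiom (fimp (FBox fset0 f) (FNext f))
| ax_nextpred P (xs : (ar P).-tuple term) :
    axiom (fiff (FNext (FPred xs)) (FPred (map_tuple tnext xs)))
| ax_nextbox X f : axiom (fimp (FNext (FBox X f)) (FBox (nextset X) (FNext f)))
| ax_nextdep X y : axiom (fimp (FNext (FDep X y)) (FDep (nextset X) (tnext y))).

Inductive DFD : form -> Prop :=
| DFD_ax f : axiom f -> DFD f
| DFD_mp f g : DFD (fimp f g) -> DFD f -> DFD g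
| DFD_nec X f : DFD f -> DFD (FBox X f).

Inductive DFDne : form -> Prop :=
| DFDne_ax f : axiom f -> ne f -> DFDne f
| DFDne_mp f g : DFDne (fimp f g) -> DFDne f -> DFDne g
| DFDne_nec X f : X != fset0 -> DFDne f -> DFDne (FBox X f)
| DFDne_necnext f : DFDne f -> DFDne (FNext f).

Record rstruct : Type := RStruct {
  W : Type;
  gnext : W -> W;
  eqr : {fset term} -> W -> W -> Prop;
  valP : forall P : Pred, (ar P).-tuple term -> W -> Prop;
  valD : {fset term} -> term -> W -> Prop
}.
Arguments gnext r _ : clear implicits, rename.
Arguments eqr r _ _ _ : clear implicits, rename.
Arguments valP r {P} _ _ : rename.
Arguments valD r _ _ _ : clear implicits, rename.

Fixpoint sat (M : rstruct) (s : W M) (f : form) : Prop :=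
  match f with
  | FTop => True
  | FPred P xs => valP M xs s
  | FNeg f => ~ @sat M s f
  | FAnd f g => @sat M s f /\ @sat M s g
  | FNext f => @sat M (gnext M s) f
  | FBox X f => forall t, eqr M X s t -> @sat M t f
  | FDep X y => valD M X y s
  end.
Arguments sat M s f : clear implicits.

Definition satDeps (M : rstruct) (s : W M) (X Y : {fset term}) : Prop :=
  forall y, y \in Y -> valD M X y s.
Arguments satDeps M s X Y : clear implicits.

(* Conditions C2--C8, required for the subscripts satisfying [ok]
   ([ok] = all sets for general relational models, [ok] = non-empty sets for
   models of DFD^{<>empty}). *)
Record conds (ok : {fset term} -> bool) (M : rstruct) : Prop := {
  C2_refl : forall X s, ok X -> eqr M X s s;
  C2_sym : forall X s w, ok X -> eqr M X s w -> eqr M X w s;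
  C2_trans : forall X s w u, ok X -> eqr M X s w -> eqr M X w u -> eqr M X s u;
  C3_refl : forall X x s, ok X -> x \in X -> valD M X x s;
  C3_trans : forall X Y Z s, ok X -> ok Y ->
    satDeps M s X Y -> satDeps M s Y Z -> satDeps M s X Z;
  C3_next : forall x s, ok Vset -> valD M Vset (tnext x) s;
  C4 : forall X Y s w, ok X -> ok Y -> eqr M X s w -> satDeps M s X Y ->
    satDeps M w X Y /\ eqr M Y s w;
  C5 : forall X P (xs : (ar P).-tuple term) s w, ok X -> eqr M X s w ->
    valP M xs s -> (forall x, x \in val xs -> x \in X) -> valP M xs w;
  C6 : forall P (xs : (ar P).-tuple term) s,
    valP M (map_tuple tnext xs) s <-> valP M xs (gnext M s);
  C7 : forall X s w, ok X -> eqr M (nextset X) s w ->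
    eqr M X (gnext M s) (gnext M w);
  C8 : forall X Y s, ok X -> satDeps M (gnext M s) X Y ->
    satDeps M s (nextset X) (nextset Y)
}.

Definition is_grm (M : rstruct) : Prop :=
  (forall s w, eqr M fset0 s w) /\ conds (fun _ => true) M.

(* General relational models of DFD^{<>empty}: C2--C8 for non-empty sets only
   (the components for the empty set are irrelevant junk). *)
Definition is_grm_ne (M : rstruct) : Prop :=
  conds (fun X => X != fset0) M.

End DFDLogic.

Arguments sat {Var Pred ar} M s f.
Arguments satDeps {Var Pred ar} M s X Y.
Arguments gnext {Var Pred ar} r _ : rename.
Arguments eqr {Var Pred ar} r _ _ _ : rename.
Arguments valD {Var Pred ar} r _ _ _ : rename.
Arguments valP {Var Pred ar} r {P} _ _ : rename.

(* Each axiom is valid at every state because the frame condition C1--C8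
   matching it holds for every subscript the axiom mentions; modus ponens and
   both necessitation rules preserve validity.  The two systems are handled
   at once by parametrising the conditions by the admissible subscripts [ok]:
   everything for DFD, the non-empty sets for DFD^{<>empty}, whose axioms
   only mention non-empty subscripts. *)

From mathcomp Require Import all_boot.
From mathcomp Require Import finmap.
From Stdlib Require Import Classical ClassicalDescription.

Set Implicit Arguments.
Unset Strict Implicit.
Unset Printing Implicit Defensive.

Local Open Scope fset_scope.

Section Soundness.
Variables (Var Pred : finType) (ar : Pred -> nat).
Implicit Types (f g : form Var ar) (M : rstruct Var ar) (X Y : {fset term Var}).

Lemma sat_fimp M s f g : sat M s (fimp f g) <-> (sat M s f -> sat M s g).
Proof.
split=> [nfg sf | fg [sf]]; last by apply; apply: fg.
by apply: NNPP => sg; apply: nfg.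
Qed.

Lemma sat_fDeps M s X Y : sat M s (@fDeps _ Pred ar X Y) <-> satDeps M s X Y.
Proof.
suff satl (l : seq (term Var)) : sat M s (bigand [seq @FDep _ Pred ar X y | y <- l])
    <-> forall y, y \in l -> valD M X y s by apply: satl.
elim: l => [|y ys IH] /=; first by split=> // _ z; rewrite in_nil.
rewrite IH; split=> [[sy sys] z|sys]; first by rewrite inE => /predU1P[->|/sys].
by split=> [|z zys]; apply: sys; rewrite inE ?eqxx ?zys ?orbT.
Qed.

Lemma beval_sat M s (v : form Var ar -> bool) :
  (forall g, v g <-> sat M s g) -> forall f, beval v f <-> sat M s f.
Proof.
move=> vE; elim=> //= [f IH | f IHf g IHg]; last first.
  by rewrite -IHf -IHg; split=> [/andP | /andP].
by rewrite -IH; split=> [/negP | /negP].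
Qed.

Lemma taut_sat M s f : taut f -> sat M s f.
Proof.
pose v g := if excluded_middle_informative (sat M s g) then true else false.
have vE g : v g <-> sat M s g by rewrite /v; case: excluded_middle_informative.
by move=> /(_ v) /(beval_sat vE).
Qed.

Fixpoint subs_ok (ok : {fset term Var} -> bool) f : bool :=
  match f with
  | FTop | FPred _ _ => true
  | FNeg f | FNext f => subs_ok ok f
  | FAnd f g => subs_ok ok f && subs_ok ok g
  | FBox X f => ok X && subs_ok ok f
  | FDep X _ => ok X
  end.

Lemma subs_ok_predT f : subs_ok predT f.
Proof. by elim: f => //= f -> g ->. Qed.

Lemma ne_subs_ok f : ne f = subs_ok (fun X => X != fset0) f.
Proof. by elim: f => //= [f -> g -> | X f ->]. Qed.

Lemma subs_ok_fDeps ok X Y y :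
  subs_ok ok (@fDeps _ Pred ar X Y) -> y \in Y -> ok X.
Proof.
rewrite /fDeps => + yY; have : y \in (Y : seq _) := yY.
elim: (Y : seq _) => [|z zs IH] //=.
by rewrite inE => /predU1P[_ /andP[] | /IH okXzs /andP[_ /okXzs]].
Qed.

Section AxiomSoundness.
Variables (ok : {fset term Var} -> bool) (M : rstruct Var ar).
Hypothesis condsM : conds ok M.
Hypothesis ok_nonempty : forall X, X != fset0 -> ok X.
Hypothesis C1_ok : ok fset0 -> forall s w, eqr M fset0 s w.

Lemma ok_fset1 (y : term Var) : ok [fset y].
Proof. by apply/ok_nonempty/fset0Pn; exists y; apply: fset11. Qed.

Lemma sat_boxT X f s : ok X -> sat M s (FBox X f) -> sat M s f.
Proof. by move=> okX; apply; apply: C2_refl condsM _ _ okX. Qed.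

Lemma sat_box4 X f s : ok X -> sat M s (FBox X f) -> sat M s (FBox X (FBox X f)).
Proof. by move=> okX sf t st u tu; apply: sf (C2_trans condsM okX st tu). Qed.

Lemma sat_box5 X f s :
  ok X -> ~ sat M s (FBox X f) -> sat M s (FBox X (FNeg (FBox X f))).
Proof.
move=> okX nsf t st tf; apply: nsf => u su.
by apply: tf (C2_trans condsM okX (C2_sym condsM okX st) su).
Qed.

Lemma valD_eqr X y s t : ok X -> eqr M X s t -> valD M X y s -> valD M X y t.
Proof.
move=> okX st sy; have sXy : satDeps M s X [fset y] by move=> z /fset1P ->.
by have [tXy _] := C4 condsM okX (ok_fset1 y) st sXy; apply/tXy/fset11.
Qed.

Lemma sat_box_transfer X Y f s :
  ok X -> ok Y -> satDeps M s X Y -> sat M s (FBox Y f) -> sat M s (FBox X f).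
Proof. by move=> okX okY sXY sf t st; apply/sf; case: (C4 condsM okX okY st sXY). Qed.

Lemma valD_next X y s :
  ok X -> valD M X y (gnext M s) -> valD M (nextset X) (tnext y) s.
Proof.
move=> okX gsy; have gsXy : satDeps M (gnext M s) X [fset y] by move=> z /fset1P ->.
by apply: (C8 condsM okX gsXy); apply/in_imfset/fset11.
Qed.

Lemma axiom_sound f s : axiom f -> subs_ok ok f -> sat M s f.
Proof.
case=> {f}.
- by move=> f tf _; apply: taut_sat.
- by move=> f g _; apply/sat_fimp => /sat_fimp fg; apply/sat_fimp.
- by move=> f _; split; apply/sat_fimp.
- move=> X f g _; apply/sat_fimp => sfg; apply/sat_fimp => sf t st.
  by move/sat_fimp: (sfg t st); apply; apply: sf.
- move=> P xs /andP[_ /andP[okX _]]; apply/sat_fimp => sxs t st.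
  by apply: (C5 condsM okX st sxs) => x xxs; apply/imfsetP; exists x.
- move=> X y /andP[okX _]; apply/sat_fimp => sy t st; exact: valD_eqr okX st sy.
- move=> X f /andP[/andP[okX _] _]; apply/sat_fimp; exact: sat_boxT.
- move=> X f /andP[/andP[okX _] _]; apply/sat_fimp; exact: sat_box4.
- move=> X f /andP[/andP[okX _] _]; apply/sat_fimp; exact: sat_box5.
- by move=> X x xX okX; exact: (C3_refl condsM s okX xX).
- move=> X Y Z /andP[/andP[okXY okYZ] okXZ].
  apply/sat_fimp => -[/sat_fDeps sXY /sat_fDeps sYZ]; apply/sat_fDeps => z zZ.
  have okX := subs_ok_fDeps okXZ zZ; have okY := subs_ok_fDeps okYZ zZ.
  exact: (C3_trans condsM okX okY sXY sYZ zZ).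
- by move=> v okV; exact: (C3_next condsM _ s okV).
- move=> X Y f /andP[/andP[_ /andP[okY _]] /andP[okX _]].
  by apply/sat_fimp => -[/sat_fDeps sXY]; apply: sat_box_transfer.
- by move=> f /andP[/andP[ok0 _] _]; apply/sat_fimp => sf; apply/sf/C1_ok.
- move=> P xs _; case: (C6 condsM xs s) => from_next to_next.
  by split; apply/sat_fimp.
- move=> X f /andP[/andP[okX _] _]; apply/sat_fimp => sf t st.
  exact/sf/(C7 condsM okX st).
- move=> X y /andP[okX _]; apply/sat_fimp; exact: valD_next.
Qed.

End AxiomSoundness.

Lemma DFD_sound f : DFD f -> forall M, is_grm M -> forall s, sat M s f.
Proof.
elim=> {f} [f ax | f g _ sfg _ sf | X f _ sf] M grmM s.
- case: grmM => C1 condsM.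
  exact: (axiom_sound condsM (fun _ _ => erefl) (fun _ => C1) s ax (subs_ok_predT f)).
- by move/sat_fimp: (sfg M grmM s); apply; apply: sf.
- by move=> t _; apply: sf.
Qed.

Lemma DFDne_sound f : DFDne f -> forall M, is_grm_ne M -> forall s, sat M s f.
Proof.
elim=> {f} [f ax nef | f g _ sfg _ sf | X f _ _ sf | f _ sf] M condsM s.
- have C1_vacuous : fset0 != fset0 :> {fset term Var} ->
      forall s w, eqr M fset0 s w by rewrite eqxx.
  by apply: (axiom_sound condsM _ C1_vacuous s ax); rewrite -?ne_subs_ok.
- by move/sat_fimp: (sfg M condsM s); apply; apply: sf.
- by move=> t _; apply: sf.
- exact: sf.
Qed.

End Soundness.

Theorem fact2p4 (Var Pred : finType) (ar : Pred -> nat) :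
  (forall f : form Var ar, DFD f ->
     forall M : rstruct Var ar, is_grm M -> forall s : W M, sat M s f) /\
  (forall f : form Var ar, DFDne f ->
     forall M : rstruct Var ar, is_grm_ne M -> forall s : W M, sat M s f).
Proof. by split; [apply: DFD_sound | apply: DFDne_sound]. Qed.
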